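(* Let $N$ be a natural number, $P=\{a\subseteq N: |a|\geq 2\}$, and let $\|\cdot\|_3$ be the graph coloring norm on subsets of $P$ (defined in the context). Let $g:P\to P$ be a polygon-reducing function and let $\psi_g$ be as defined in the context. Then for every $A\subseteq P$, $\|A\|_3\leq \|\psi_g(A)\|_3$.
   Context: $N=\{0,\ldots,N-1\}$. For $A\subseteq P$ and $z\subseteq N$ let $A\restriction z=\{a\in A: a\subseteq z\}$. The relation ''$\|A\|_3\geq m$'' is defined recursively: $\|A\|_3\geq 0$ always; $\|A\|_3\geq 1$ iff $A\neq\emptyset$; for $m\geq 1$, $\|A\|_3\geq m+1$ iff for every $z\subseteq N$ either $\|A\restriction z\|_3\geq m$ or $\|A\restriction(N\setminus z)\|_3\geq m$. Then $\|A\|_3$ is the largest $m$ with $\|A\|_3\geq m$. Define $f:\mathcal P(N)\to\omega$ by $f(a)=a_0N^0+a_1N^1+\cdots+a_kN^k$ where $a=\{a_0<a_1<\cdots<a_k\}$. A function $g:P\to P$ is polygon-reducing if $g(a)\subseteq a$ for all $a\in P$, and $g(a)=a$ iff $|a|=2$. For such $g$, $\psi_g:\mathcal P(P)\to\mathcal P(P)$ is given by $\psi_g(\emptyset)=\emptyset$ and, for non-empty $A\subseteq P$, $\psi_g(A)=(A\setminus\{a\})\cup\{g(a)\}$ where $a\in A$ satisfies $f(a)=\max\{f(a'):a'\in A\}$. *)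

From mathcomp Require Import all_boot.
Set Implicit Arguments. Unset Strict Implicit. Unset Printing Implicit Defensive.

(* The ground set N = {0,...,N-1} is the ordinal type 'I_N. *)

Definition P (N : nat) : {set {set 'I_N}} := [set a : {set 'I_N} | 2 <= #|a|].

Definition restr (N : nat) (A : {set {set 'I_N}}) (z : {set 'I_N}) : {set {set 'I_N}} :=
  [set a in A | a \subset z].

(* norm3_ge m A  <=>  ||A||_3 >= m  (recursive definition from the paper) *)
Fixpoint norm3_ge (N : nat) (m : nat) (A : {set {set 'I_N}}) : bool :=
  match m with
  | 0 => true
  | 1 => A != set0
  | m'.+1 => [forall z : {set 'I_N},
                norm3_ge m' (restr A z) || norm3_ge m' (restr A (~: z))]
  end.

(* ||A||_3 = largest m with ||A||_3 >= m.  For A a subset of P one has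
   ||A||_3 <= N + 1, so the search range m < N + 2 is exhaustive. *)
Definition norm3 (N : nat) (A : {set {set 'I_N}}) : nat :=
  \max_(m < N.+2 | norm3_ge m A) m.

Definition fcode (N : nat) (a : {set 'I_N}) : nat :=
  let s := sort leq [seq val x | x <- enum a] in
  \sum_(i < size s) nth 0 s i * N ^ i.

Definition polygon_reducing (N : nat) (g : {set 'I_N} -> {set 'I_N}) : Prop :=
  forall a, a \in P N ->
    [/\ g a \in P N, g a \subset a & (g a == a) = (#|a| == 2)].

Definition psi (N : nat) (g : {set 'I_N} -> {set 'I_N}) (A : {set {set 'I_N}})
  : {set {set 'I_N}} :=
  match [pick a in A | [forall a' in A, fcode a' <= fcode a]] with
  | Some a => (A :\ a) :|: [set g a]
  | None => set0
  end.

From mathcomp Require Import all_boot.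
Set Implicit Arguments. Unset Strict Implicit. Unset Printing Implicit Defensive.

(* psi_g replaces one member a of A by its subset g(a), so every member of A
   still contains a member of psi_g(A).  The relation ||A||_3 >= m is monotone
   along this "refinement" order, because restricting both families to the same
   z preserves refinement. *)

Section Refinement.

Variable N : nat.
Implicit Types (A B : {set {set 'I_N}}) (z : {set 'I_N}).

Definition refines A B := forall a, a \in A -> exists2 b, b \in B & b \subset a.

Lemma refines_restr A B z : refines A B -> refines (restr A z) (restr B z).
Proof.
move=> AB a; rewrite inE => /andP[aA az].
have [b bB ba] := AB a aA.
by exists b; rewrite // inE bB (subset_trans ba az).
Qed.

Lemma norm3_ge_refines m A B : refines A B -> norm3_ge m A -> norm3_ge m B.
Proof.
elim: m A B => [//|[|m] IHm] A B AB.
  case/set0Pn=> a aA; have [b bB _] := AB a aA.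
  by apply/set0Pn; exists b.
move/forallP=> splitA; apply/forallP=> z.
by apply/orP; case/orP: (splitA z) => /(IHm _ _ (refines_restr AB)); [left|right].
Qed.

Lemma norm3_refines A B : refines A B -> norm3 A <= norm3 B.
Proof.
move=> AB; apply/bigmax_leqP=> m normA_ge_m.
exact: (leq_bigmax_cond (F := fun k : 'I_N.+2 => val k)) (norm3_ge_refines AB normA_ge_m).
Qed.

Lemma psi_refines (g : {set 'I_N} -> {set 'I_N}) A :
  {in A, forall a, g a \subset a} -> refines A (psi g A).
Proof.
move=> g_sub; rewrite /psi; case: pickP => [a /andP[aA _] | no_max] a' a'A.
  case: (eqVneq a' a) => [-> | a'_neq_a].
    by exists (g a); rewrite ?g_sub // !inE eqxx orbT.
  by exists a'; rewrite // !inE a'_neq_a a'A.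
have [a aA a_max] := @arg_maxnP _ a' (fun x => x \in A) (@fcode N) a'A.
have := no_max a; rewrite /= aA => /negbT/forall_inPn[b bA].
by move=> /negP[]; exact: a_max.
Qed.

End Refinement.

Theorem theorem5p22 (N : nat) (g : {set 'I_N} -> {set 'I_N}) :
  polygon_reducing g ->
  forall A : {set {set 'I_N}}, A \subset P N -> norm3 A <= norm3 (psi g A).
Proof.
move=> g_reducing A AP; apply/norm3_refines/psi_refines=> a aA.
by have [] := g_reducing a (subsetP AP a aA).
Qed.
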